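(* $\mathcal{H}_{N}'$ is generated as a Lie algebra by the elements $h_{\pm e_i}$ ($1\le i\le N$) and $h_{\pm e_j\pm e_k}$ ($1\le j<k\le N$).
   Context: $\mathbb{K}$ is an algebraically closed field of characteristic zero, $N=2m\ge2$ even, $e_1,\dots,e_N$ the standard basis of $\mathbb{Z}^N\subset\mathbb{K}^N$, $(\cdot,\cdot)$ the bilinear form with $(e_i,e_j)=\delta_{ij}$. Let $A_N=\mathbb{K}[t_1^{\pm1},\dots,t_N^{\pm1}]$, $d_i=t_i\frac{\partial}{\partial t_i}$, $t^{\bm r}=t_1^{r_1}\cdots t_N^{r_N}$, $D(u,\bm r)=\sum_i u_it^{\bm r}d_i$. Let $\bm J=\begin{pmatrix} O_m & I_m\\ -I_m & O_m\end{pmatrix}$, $\overline{\bm r}=\bm J\bm r$, $h_{\bm r}=D(\overline{\bm r},\bm r)$ (so $h_{\bm 0}=0$). $\mathcal{H}_N'=\operatorname{span}_{\mathbb{K}}\{h_{\bm r}:\bm r\in\mathbb{Z}^N\setminus\{\bm0\}\}$ is the Lie algebra with bracket $[h_{\bm r},h_{\bm s}]=(\overline{\bm r},\bm s)h_{\bm r+\bm s}$ (derived subalgebra of the Hamiltonian Lie algebra). *)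

From HB Require Import structures.
From mathcomp Require Import all_boot all_order all_algebra.
From mathcomp Require Import finmap.
From mathcomp.multinomials Require Import monalg.
Set Implicit Arguments. Unset Strict Implicit. Unset Printing Implicit Defensive.
Import Order.TTheory GRing.Theory Num.Theory.
Local Open Scope ring_scope.

(* N = m + m.  Lattice points r in Z^N are row vectors 'rV[int]_(m+m). *)
Definition latt (m : nat) := 'rV[int]_(m + m).

Definition Jmx (m : nat) : 'M[int]_(m + m) := block_mx 0 1%:M (-1%:M) 0.

Definition rbar m (r : latt m) : latt m := (Jmx m *m r^T)^T.

Definition dotK (K : fieldType) m (u v : latt m) : K :=
  \sum_(i < m + m) ((u 0 i) * (v 0 i))%:~R.

Definition ee m (i : 'I_(m + m)) : latt m := delta_mx 0 i.

(* The ambient vector space: finitely supported K-linear combinations of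
   symbols h_r, r in Z^N.  H'_N is the subspace with zero coefficient at r = 0
   (h_0 = 0). *)
Definition Hspace (K : fieldType) m := {malg K[latt m]}.

Definition hb (K : fieldType) m (r : latt m) : Hspace K m :=
  if r == 0 then 0 else << (1 : K) *g r >>.

Definition inH (K : fieldType) m (x : Hspace K m) : Prop := x@_0 = 0.

Definition hbr (K : fieldType) m (x y : Hspace K m) : Hspace K m :=
  \sum_(r <- msupp x) \sum_(s <- msupp y)
     (x@_r * y@_s * dotK K (rbar r) s) *: hb K (r + s).

Inductive lie_gen (K : fieldType) m (S : Hspace K m -> Prop) : Hspace K m -> Prop :=
  | lg_gen x : S x -> lie_gen S x
  | lg_zero : lie_gen S 0
  | lg_add x y : lie_gen S x -> lie_gen S y -> lie_gen S (x + y)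
  | lg_scale (c : K) x : lie_gen S x -> lie_gen S (c *: x)
  | lg_br x y : lie_gen S x -> lie_gen S y -> lie_gen S (hbr x y).

Definition gens (K : fieldType) m (x : Hspace K m) : Prop :=
  (exists (i : 'I_(m + m)) (a : int), (a == 1) || (a == -1) /\ x = hb K (a *: ee i))
  \/ (exists (j k : 'I_(m + m)) (a b : int),
        [/\ (j < k)%N, (a == 1) || (a == -1), (b == 1) || (b == -1)
          & x = hb K (a *: ee j + b *: ee k)]).

(* Write omega(s, t) := (sbar, t) for the symplectic form of J, so that
   [h_s, h_t] = omega(s, t) h_(s+t).  In characteristic zero, h_s and h_t in
   the generated subalgebra with omega(s, t) <> 0 therefore put h_(s+t) there
   too.  Every r <> 0 is reached by induction on the weight 2 |r|_1 + b(r),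
   where b(r) = 0 if some coordinate r_i and its J-partner r_(i +- m) are both
   nonzero and b(r) = 1 otherwise.  If such a pair exists, removing one unit
   from r_(i +- m) lowers |r|_1; if not, removing e_(i +- m) + e_q for any
   nonzero r_i and r_q keeps |r|_1 but creates such a pair, unless r = +-e_i
   is itself a generator.  In both cases the removed generator s satisfies
   omega(s, r) <> 0. *)
From HB Require Import structures.
From mathcomp Require Import all_boot all_order all_algebra.
From mathcomp Require Import finmap.
From mathcomp.multinomials Require Import monalg.
From mathcomp Require Import zify ring.
Set Implicit Arguments. Unset Strict Implicit. Unset Printing Implicit Defensive.
Import Order.TTheory GRing.Theory Num.Theory.
Local Open Scope ring_scope.

Lemma malgU_scale (G : ringType) (T : choiceType) (c : G) (k : T) :
  << c *g k >> = c *: << 1 *g k >>.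
Proof. by apply/malgP => k'; rewrite mcoeffZ !mcoeffU mulr_natr. Qed.

Section Hamiltonian.
Variables (K : fieldType) (m : nat).
Implicit Types (r s : latt m) (x y : Hspace K m) (S : Hspace K m -> Prop).

Lemma hb0 : hb K (0 : latt m) = 0.
Proof. by rewrite /hb eqxx. Qed.

Lemma hbE r : r != 0 -> hb K r = << (1 : K) *g r >>.
Proof. by rewrite /hb => /negbTE ->. Qed.

Lemma hb_inH r : inH (hb K r).
Proof.
rewrite /inH /hb; case: eqP => [_ | /eqP r_neq0]; first by rewrite mcoeff0.
by rewrite mcoeffU (negbTE r_neq0).
Qed.

Lemma hbr_inH x y : inH (hbr x y).
Proof.
rewrite /inH /hbr raddf_sum big1 // => r _; rewrite raddf_sum big1 // => s _.
by rewrite /= mcoeffZ hb_inH mulr0.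
Qed.

Lemma hbr_hb r s : r != 0 -> s != 0 ->
  hbr (hb K r) (hb K s) = dotK K (rbar r) s *: hb K (r + s).
Proof.
move=> r_neq0 s_neq0; rewrite /hbr (hbE r_neq0) (hbE s_neq0) !msuppU oner_eq0.
by rewrite !big_seq_fset1 !mcoeffUU !mul1r.
Qed.

Lemma gens_inH x : gens x -> inH x.
Proof. by case=> [[i [a [_ ->]]] | [j [k [a [b [_ _ _ ->]]]]]]; apply: hb_inH. Qed.

Lemma lie_gen_inH S x : (forall y, S y -> inH y) -> lie_gen S x -> inH x.
Proof.
move=> S_inH; rewrite /inH; elim=> {x} [x /S_inH // | | x y _ x0 _ y0 | c x _ x0 |].
- by rewrite mcoeff0.
- by rewrite mcoeffD x0 y0 addr0.
- by rewrite mcoeffZ x0 mulr0.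
- by move=> x y _ _ _ _; apply: hbr_inH.
Qed.

Lemma inH_lie_gen S x : (forall r, lie_gen S (hb K r)) -> inH x -> lie_gen S x.
Proof.
rewrite /inH => S_hb x0; rewrite [x]monalgE big_seq.
apply: (big_ind (lie_gen S)); [exact: lg_zero | exact: lg_add |] => r r_supp.
have r_neq0 : r != 0 by apply: contraTneq r_supp => ->; rewrite -mcoeff_neq0 x0 eqxx.
rewrite malgU_scale -hbE //.
exact/lg_scale/S_hb.
Qed.

End Hamiltonian.

Section Symplectic.
Variable m : nat.
Implicit Types (u v w : latt m) (i : 'I_(m + m)).

Definition jmate i : 'I_(m + m) :=
  match split i with inl j => rshift m j | inr j => lshift m j end.

Definition jsign i : int := match split i with inl _ => 1 | inr _ => -1 end.

Lemma ord_splitP i : (exists j, i = lshift m j) \/ (exists j, i = rshift m j).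
Proof. by rewrite -(splitK i); case: (split i) => j; [left | right]; exists j. Qed.

Lemma jmate_lshift j : jmate (lshift m j) = rshift m j.
Proof. by rewrite /jmate (unsplitK (inl _ j)). Qed.

Lemma jmate_rshift j : jmate (rshift m j) = lshift m j.
Proof. by rewrite /jmate (unsplitK (inr _ j)). Qed.

Lemma jsign_lshift j : jsign (lshift m j) = 1.
Proof. by rewrite /jsign (unsplitK (inl _ j)). Qed.

Lemma jsign_rshift j : jsign (rshift m j) = -1.
Proof. by rewrite /jsign (unsplitK (inr _ j)). Qed.

Lemma jmateK : involutive jmate.
Proof.
by move=> i; case: (ord_splitP i) => [[j ->] | [j ->]];
  rewrite ?(jmate_lshift, jmate_rshift).
Qed.

Lemma jsign_jmate i : jsign (jmate i) = - jsign i.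
Proof.
case: (ord_splitP i) => [[j ->] | [j ->]];
  by rewrite ?jmate_lshift ?jmate_rshift ?jsign_lshift ?jsign_rshift ?opprK.
Qed.

Lemma jmate_neq i : jmate i != i.
Proof.
case: (ord_splitP i) => [[j ->] | [j ->]]; rewrite ?jmate_lshift ?jmate_rshift;
  by apply/eqP => /(congr1 val) /=; have := ltn_ord j; lia.
Qed.

Lemma jsign_neq0 i : jsign i != 0.
Proof. by case: (ord_splitP i) => [[j ->] | [j ->]]; rewrite ?jsign_lshift ?jsign_rshift. Qed.

Lemma rbarE u i : rbar u 0 i = jsign i * u 0 (jmate i).
Proof.
rewrite /rbar -[u]hsubmxK tr_row_mx /Jmx mul_block_col !mul0mx !mul1mx mulNmx.
rewrite mul1mx add0r addr0 tr_col_mx !trmxK.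
case: (ord_splitP i) => [[j ->] | [j ->]].
  by rewrite row_mxEl jmate_lshift jsign_lshift mul1r row_mxEr.
by rewrite row_mxEr jmate_rshift jsign_rshift row_mxEl mulN1r !mxE.
Qed.

Definition symp u v : int := \sum_i jsign i * u 0 (jmate i) * v 0 i.

Lemma dotK_rbar (K : fieldType) u v : dotK K (rbar u) v = (symp u v)%:~R.
Proof. by rewrite /dotK /symp rmorph_sum; apply: eq_bigr => i _; rewrite rbarE. Qed.

Lemma symp0l v : symp 0 v = 0.
Proof. by rewrite /symp big1 // => i _; rewrite mxE mulr0 mul0r. Qed.

Lemma symp0r u : symp u 0 = 0.
Proof. by rewrite /symp big1 // => i _; rewrite mxE mulr0. Qed.

Lemma sympDl u v w : symp (u + v) w = symp u w + symp v w.
Proof. by rewrite /symp -big_split; apply: eq_bigr => i _; rewrite mxE /=; ring. Qed.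

Lemma sympZl c u v : symp (c *: u) v = c * symp u v.
Proof. by rewrite /symp mulr_sumr; apply: eq_bigr => i _; rewrite mxE /=; ring. Qed.

Lemma sympBr u v w : symp u (v - w) = symp u v - symp u w.
Proof. by rewrite /symp -sumrB; apply: eq_bigr => i _; rewrite !mxE /=; ring. Qed.

Lemma symp_ee a v : symp (ee a) v = jsign (jmate a) * v 0 (jmate a).
Proof.
rewrite /symp (bigD1 (jmate a)) //= big1 ?addr0 => [|i i_neq].
  by rewrite mxE jmateK !eqxx mulr1.
rewrite mxE eqxx; case: eqP => [a_eq | _]; last by rewrite mulr0 mul0r.
by move: i_neq; rewrite -a_eq jmateK eqxx.
Qed.

Lemma symp_self u : symp u u = 0.
Proof.
have : symp u u = - symp u u.
  rewrite {1}/symp (reindex_inj (inv_inj jmateK)) -sumrN.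
  by apply: eq_bigr => i _; rewrite jmateK jsign_jmate; ring.
lia.
Qed.

Lemma symp_subr_self u v : symp u (v - u) = symp u v.
Proof. by rewrite sympBr symp_self subr0. Qed.

End Symplectic.

Section WeightReduction.
Variable m : nat.
Implicit Types (r s t : latt m) (a b p q : 'I_(m + m)) (c d : int).

Definition unit_int c := (c == 1) || (c == -1).

Definition gen_vec r :=
  (exists a c, unit_int c /\ r = c *: ee a)
  \/ (exists a b c d, [/\ a != b, unit_int c, unit_int d & r = c *: ee a + d *: ee b]).

Definition norm1 r : nat := \sum_i absz (r 0%R i).

Definition has_jpair r := [exists i, (r 0 i != 0) && (r 0 (jmate i) != 0)].

Definition weight r : nat := (2 * norm1 r + ~~ has_jpair r)%N.

Definition splits r :=
  exists s, [/\ gen_vec s, (weight (r - s)%R < weight r)%N & symp s r != 0].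

Lemma sgr_unit c : c != 0 -> unit_int (Num.sg c).
Proof. by rewrite /unit_int; case: sgrP. Qed.

Lemma abszB_sgr c : c != 0 -> (absz (c - Num.sg c) + 1 = absz c)%N.
Proof. by case: sgrP => // c_sign _; lia. Qed.

Lemma norm1_update r t a : (forall i, i != a -> t 0 i = r 0 i) ->
  (norm1 t + absz (r 0%R a) = norm1 r + absz (t 0%R a))%N.
Proof.
move=> t_off; rewrite /norm1 (bigD1 a) // [in RHS](bigD1 a) //=.
by rewrite (eq_bigr (fun i => absz (r 0 i))) => [|i /t_off ->]; first lia.
Qed.

Lemma weight_subr_lt r s :
  (norm1 (r - s)%R < norm1 r)%N -> (weight (r - s)%R < weight r)%N.
Proof. by rewrite /weight; case: (has_jpair _); case: (has_jpair _) => /=; lia. Qed.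

Lemma weight_subr_jpair r s : ~~ has_jpair r -> has_jpair (r - s) ->
  norm1 (r - s) = norm1 r -> (weight (r - s)%R < weight r)%N.
Proof. by rewrite /weight => /negbTE-> -> ->; lia. Qed.

Lemma splits_jpair r i : r 0 i != 0 -> r 0 (jmate i) != 0 -> splits r.
Proof.
set a := jmate i => ri_neq0 ra_neq0; set c : int := Num.sg (r 0 a).
exists (c *: ee a); split.
- by left; exists a, c; split; first exact: sgr_unit.
- apply: weight_subr_lt; set t := r - _.
  have tE j : t 0 j = r 0 j - c * (j == a)%:R by rewrite /t !mxE eqxx.
  have t_off j : j != a -> t 0 j = r 0 j by rewrite tE => /negbTE->; rewrite mulr0 subr0.
  have := norm1_update t_off; have := abszB_sgr ra_neq0.
  by rewrite tE eqxx mulr1 -/c; lia.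
- by rewrite sympZl symp_ee /a jmateK !mulf_neq0 ?jsign_neq0 ?sgr_eq0.
Qed.

Lemma splits_no_jpair r p q : ~~ has_jpair r -> r 0 p != 0 -> r 0 q != 0 ->
  (q != p) || (1 < absz (r 0%R p))%N -> splits r.
Proof.
move=> no_jpair rp_neq0 rq_neq0 q_p.
have r_jmate i : r 0 i != 0 -> r 0 (jmate i) = 0.
  by move=> ri_neq0; apply/eqP; move/existsPn/(_ i): no_jpair; rewrite ri_neq0 negbK.
have mate_neq_q : jmate p != q by apply: contraNneq rq_neq0 => <-; rewrite r_jmate.
set d : int := Num.sg (r 0 q).
exists (1 *: ee (jmate p) + d *: ee q); split.
- by right; exists (jmate p), q, 1, d; split; rewrite // sgr_unit.
- set t := r - _; set r1 := r - d *: ee q.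
  have r1E j : r1 0 j = r 0 j - d * (j == q)%:R by rewrite /r1 !mxE eqxx.
  have tE j : t 0 j = r1 0 j - (j == jmate p)%:R by rewrite /t r1E !mxE eqxx /=; ring.
  have r1_off j : j != q -> r1 0 j = r 0 j by rewrite r1E => /negbTE->; rewrite mulr0 subr0.
  have t_off j : j != jmate p -> t 0 j = r1 0 j by rewrite tE => /negbTE->; rewrite subr0.
  have r1_mate : r1 0 (jmate p) = 0 by rewrite r1_off ?r_jmate.
  have t_mate : t 0 (jmate p) = -1 by rewrite tE r1_mate eqxx sub0r.
  have := abszB_sgr rq_neq0; rewrite -/d => absz_rq.
  apply: weight_subr_jpair => //.
    apply/existsP; exists p; rewrite t_mate oppr_eq0 oner_eq0 andbT.
    rewrite t_off 1?eq_sym ?jmate_neq // r1E.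
    by case: (eqVneq q p) q_p => [<- | _] /=; rewrite ?mulr1 ?mulr0 ?subr0 //; lia.
  have := norm1_update t_off; have := norm1_update r1_off.
  by rewrite -/t t_mate r1_mate r1E eqxx mulr1; lia.
- rewrite sympDl !sympZl !symp_ee jmateK r_jmate // mulr0 mulr0 addr0 mul1r.
  by rewrite mulf_neq0 ?jsign_neq0.
Qed.

Lemma gen_vec_or_splits r : r != 0 -> gen_vec r \/ splits r.
Proof.
move=> r_neq0; have [p rp_neq0] : exists p, r 0 p != 0.
  apply/existsP; apply: contraNT r_neq0 => /existsPn r0.
  by apply/eqP/matrixP => i j; rewrite ord1 mxE; apply/eqP/negPn/r0.
case: (boolP (has_jpair r)) => [/existsP[i /andP[ri rmi]] | no_jpair].
  by right; apply: splits_jpair ri rmi.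
case: (boolP [exists q, (r 0 q != 0) && ((q != p) || (1 < absz (r 0%R p))%N)]).
  by case/existsP => q /andP[rq q_p]; right; apply: splits_no_jpair q_p.
move/existsPn => single; left; left; exists p, (r 0 p); split.
  by move: (single p); rewrite rp_neq0 eqxx /= -leqNgt /unit_int; lia.
apply/matrixP => i j; rewrite ord1 !mxE eqxx /=.
case: (eqVneq j p) => [-> | j_p]; first by rewrite mulr1.
by move: (single j); rewrite j_p /= andbT negbK mulr0 => /eqP.
Qed.

End WeightReduction.

Lemma intr_neq0_pchar0 (R : idomainType) (z : int) :
  [pchar R] =i pred0 -> z != 0 -> z%:~R != 0 :> R.
Proof.
move=> /(pcharf0P R) natr_eq0; case: z => n n_neq0; first by rewrite -pmulrn natr_eq0.
by rewrite NegzE mulrNz oppr_eq0 -pmulrn natr_eq0.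
Qed.

Section Generation.
Variables (K : fieldType) (m : nat).
Hypothesis charK0 : [pchar K] =i pred0.
Implicit Types (r s t : latt m) (S : Hspace K m -> Prop).

Lemma gens_hb r : gen_vec r -> gens (hb K r).
Proof.
case=> [[a [c [c_unit ->]]] | [a [b [c [d [a_neq_b c_unit d_unit ->]]]]]].
  by left; exists a, c.
right; case: (ltngtP a b) => [a_lt_b | b_lt_a | /val_inj a_eq_b].
- by exists a, b, c, d.
- by exists b, a, d, c; rewrite addrC.
- by rewrite a_eq_b eqxx in a_neq_b.
Qed.

Lemma lie_gen_hbD S s t : lie_gen S (hb K s) -> lie_gen S (hb K t) ->
  symp s t != 0 -> lie_gen S (hb K (s + t)).
Proof.
move=> Ss St st_neq0.
have s_neq0 : s != 0 by apply: contraNneq st_neq0 => ->; rewrite symp0l.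
have t_neq0 : t != 0 by apply: contraNneq st_neq0 => ->; rewrite symp0r.
have st_unit : (symp s t)%:~R != 0 :> K by apply: intr_neq0_pchar0.
have -> : hb K (s + t) = (symp s t)%:~R^-1 *: hbr (hb K s) (hb K t).
  by rewrite hbr_hb // dotK_rbar scalerA mulVf // scale1r.
exact/lg_scale/lg_br.
Qed.

Lemma lie_gen_hb r : lie_gen (@gens K m) (hb K r).
Proof.
elim: (weight r).+1 {-2}r (ltnSn (weight r)) => // n IH {}r r_weight.
case: (eqVneq r 0) => [-> | /gen_vec_or_splits[r_gen | [s [s_gen s_weight s_r]]]].
- by rewrite hb0; apply: lg_zero.
- exact/lg_gen/gens_hb.
- have -> : r = s + (r - s) by rewrite addrC subrK.
  apply: lie_gen_hbD; first exact/lg_gen/gens_hb.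
    exact: IH (leq_trans s_weight r_weight).
  by rewrite symp_subr_self.
Qed.

End Generation.

Theorem lemma4p1 (K : closedFieldType) (m : nat)
  (charK0 : [pchar K] =i pred0) (m_pos : (0 < m)%N) :
  (forall x : Hspace K m, lie_gen (@gens K m) x -> inH x) /\
  (forall x : Hspace K m, inH x -> lie_gen (@gens K m) x).
Proof.
split=> x; first exact/lie_gen_inH/gens_inH.
by apply: inH_lie_gen => r; apply: lie_gen_hb charK0 r.
Qed.
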